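(* Let $c\ge 1$ be an integer and $\lambda_1,\lambda_2,\mu_1,\mu_2>0$. Let $X$ be the continuous-time Markov chain on $\mathbb{N}_0^2$ described in the context, started at $X(0)=(0,0)$, and let $\pi_x(\alpha)$, $x\in\mathbb{N}_0^2$, $\mathrm{Re}\,\alpha>0$, be the Laplace transforms of its transition functions. Fix $\alpha$ with $\mathrm{Re}\,\alpha>0$ and define numbers $\{v_{i,j}\}_{i\ge j\ge 0}$ recursively by $v_{0,0}=\pi_{(0,c-1)}(\alpha)$ and, for $i\ge 0$, $$v_{i+1,0}=\pi_{(i+1,c-1)}(\alpha),\qquad v_{i+1,j}=R_1\Bigl(v_{i,j-1}+R_2\sum_{k=j}^{i}v_{i,k}\Bigr),\quad 1\le j\le i+1.$$ Then for all $i\ge 0$ and $j\ge 1$, $$\pi_{(i,c-1+j)}(\alpha)=\sum_{k=0}^{i}v_{i,k}\,(1-R_2)^k\binom{j-1+k}{k}r_2^{\,j}.$$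
   Context: The Markov chain $X=\{(X_1(t),X_2(t))\}_{t\ge0}$ on $\mathbb{N}_0^2$ has as its only nonzero off-diagonal transition rates: $q((i,j),(i+1,j))=\lambda_1$ ($i,j\ge0$); $q((i,j),(i,j+1))=\lambda_2$ ($i,j\ge0$); $q((i,j),(i-1,j))=\max(\min(i,c-j),0)\mu_1$ ($i\ge1$, $j\ge0$); $q((i,j),(i,j-1))=\min(c,j)\mu_2$ ($i\ge0$, $j\ge1$). (It models an $M/M/c$ queue with two classes, class 2 having preemptive-resume priority over class 1; $X_n(t)$ is the number of class-$n$ customers.) For $x\in\mathbb{N}_0^2$, $p_x(t)=P(X(t)=x\mid X(0)=(0,0))$ and $\pi_x(\alpha)=\int_0^\infty e^{-\alpha t}p_x(t)\,dt$ for $\mathrm{Re}\,\alpha>0$. For $\lambda,\mu>0$, $\phi_{\lambda,\mu}(s)=E[e^{-sB}]=\frac{\lambda+\mu+s-\sqrt{(\lambda+\mu+s)^2-4\lambda\mu}}{2\lambda}$ is the Laplace–Stieltjes transform of the busy period $B$ of an $M/M/1$ queue with arrival rate $\lambda$ and service rate $\mu$ started by one customer. Set $\rho_2=\lambda_2/(c\mu_2)$, $\phi_2=\phi_{\lambda_2,c\mu_2}(\lambda_1+\alpha)$, $r_2=\rho_2\phi_2$, $\Omega_2=\frac{\rho_2\phi_2}{\lambda_2(1-\rho_2\phi_2^2)}$, $R_1=\frac{\lambda_1\Omega_2}{1-r_2\phi_2}$, $R_2=r_2\phi_2$. Empty sums are zero. *)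

From Stdlib Require Import Reals List Arith.
From Coquelicot Require Import Coquelicot.
Open Scope R_scope.

Definition Cexp (z : C) : C :=
  (exp (fst z) * cos (snd z), exp (fst z) * sin (snd z)).

(* principal square root (Re >= 0; cut along the negative real axis) *)
Definition Csqrt (z : C) : C :=
  let r := Cmod z in
  (sqrt ((r + fst z) / 2),
   if Rlt_dec (snd z) 0 then - sqrt ((r - fst z) / 2) else sqrt ((r - fst z) / 2)).

Definition Csum (f : nat -> C) (a b : nat) : C :=
  fold_right Cplus (RtoC 0) (map f (seq a (S b - a))).

Definition state := (nat * nat)%type.

Definition qrate (c : nat) (l1 l2 m1 m2 : R) (x y : state) : R :=
  let (i, j) := x in let (i', j') := y in
  (if (Nat.eqb i' (S i) && Nat.eqb j' j)%bool then l1 else 0) +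
  (if (Nat.eqb i' i && Nat.eqb j' (S j))%bool then l2 else 0) +
  (if (Nat.eqb (S i') i && Nat.eqb j' j)%bool
     then INR (Nat.min i (c - j)) * m1 else 0) +   (* = max(min(i,c-j),0) mu1 *)
  (if (Nat.eqb i' i && Nat.eqb (S j') j)%bool
     then INR (Nat.min c j) * m2 else 0).

(* all states y <> x with q(x,y) possibly nonzero (the relation is symmetric,
   so these are also all states x <> y with q(x,y) possibly nonzero) *)
Definition nbrs (x : state) : list state :=
  let (i, j) := x in
  (S i, j) :: (i, S j) ::
  (match i with O => nil | S i' => (i', j) :: nil end) ++
  (match j with O => nil | S j' => (i, j') :: nil end).

Definition Rsum_list (l : list R) : R := fold_right Rplus 0 l.

Definition qout c l1 l2 m1 m2 (x : state) : R :=
  Rsum_list (map (fun y => qrate c l1 l2 m1 m2 x y) (nbrs x)).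

(* uniformization constant: an upper bound for all outflow rates *)
Definition Lam (c : nat) (l1 l2 m1 m2 : R) : R := l1 + l2 + INR c * (m1 + m2).

(* distribution after n steps of the uniformized jump chain
   P = I + Q/Lam, started at (0,0):  dist (n+1) y = sum_x dist n x * P(x,y) *)
Fixpoint dist c l1 l2 m1 m2 (n : nat) (y : state) : R :=
  match n with
  | O => if (Nat.eqb (fst y) 0 && Nat.eqb (snd y) 0)%bool then 1 else 0
  | S n' =>
      dist c l1 l2 m1 m2 n' y * (1 - qout c l1 l2 m1 m2 y / Lam c l1 l2 m1 m2) +
      Rsum_list (map (fun x => dist c l1 l2 m1 m2 n' x *
                               (qrate c l1 l2 m1 m2 x y / Lam c l1 l2 m1 m2))
                     (nbrs y))
  end.

(* transition function p_x(t) = P(X(t) = x | X(0) = (0,0)) = (e^{tQ})_{(0,0),x},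
   computed by uniformization (the rates are bounded by Lam). *)
Definition ptrans c l1 l2 m1 m2 (x : state) (t : R) : R :=
  Series (fun n => exp (- (Lam c l1 l2 m1 m2 * t)) *
                   (Lam c l1 l2 m1 m2 * t) ^ n / INR (fact n) *
                   dist c l1 l2 m1 m2 n x).

Definition is_laplace_pi c l1 l2 m1 m2 (alpha : C) (x : state) (v : C) : Prop :=
  is_RInt_gen (fun t : R => Cmult (Cexp (Copp (Cmult alpha (RtoC t))))
                                  (RtoC (ptrans c l1 l2 m1 m2 x t)))
              (at_point 0) (Rbar_locally p_infty) v.

Definition phiB (lam mu : R) (s : C) : C :=
  let w := Cplus (RtoC (lam + mu)) s in
  Cdiv (Cminus w (Csqrt (Cminus (Cmult w w) (RtoC (4 * lam * mu))))) (RtoC (2 * lam)).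

Definition rho2 c l2 m2 : R := l2 / (INR c * m2).
Definition phi2 c l1 l2 m2 (alpha : C) : C :=
  phiB l2 (INR c * m2) (Cplus (RtoC l1) alpha).
Definition r2 c l1 l2 m2 alpha : C := Cmult (RtoC (rho2 c l2 m2)) (phi2 c l1 l2 m2 alpha).
Definition Omega2 c l1 l2 m2 alpha : C :=
  let p := phi2 c l1 l2 m2 alpha in
  Cdiv (Cmult (RtoC (rho2 c l2 m2)) p)
       (Cmult (RtoC l2) (Cminus (RtoC 1) (Cmult (RtoC (rho2 c l2 m2)) (Cmult p p)))).
Definition bigR1 c l1 l2 m2 alpha : C :=
  Cdiv (Cmult (RtoC l1) (Omega2 c l1 l2 m2 alpha))
       (Cminus (RtoC 1) (Cmult (r2 c l1 l2 m2 alpha) (phi2 c l1 l2 m2 alpha))).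
Definition bigR2 c l1 l2 m2 alpha : C :=
  Cmult (r2 c l1 l2 m2 alpha) (phi2 c l1 l2 m2 alpha).

(* the recursively defined numbers v_{i,j}, i >= j >= 0 (values for j > i
   are irrelevant) ; pi x stands for pi_x(alpha) *)
Fixpoint vseq (c : nat) (R1 R2 : C) (pi : state -> C) (i : nat) : nat -> C :=
  match i with
  | O => fun _ => pi (0%nat, (c - 1)%nat)
  | S i' => fun j =>
      match j with
      | O => pi (S i', (c - 1)%nat)
      | S j' => Cmult R1 (Cplus (vseq c R1 R2 pi i' j')
                                (Cmult R2 (Csum (vseq c R1 R2 pi i') (S j') i')))
      end
  end.

From Pilot Require Import Defs.
From Stdlib Require Import Reals List Arith Lia Lra.
From Coquelicot Require Import Coquelicot.
Open Scope R_scope.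

(* The transition functions are given by uniformization,
   [p_x(t) = e^(-L t) sum_n (L t)^n / n! P^n((0,0), x)], a power series in [t] that may be
   differentiated termwise: this yields the forward equations [p' = p Q].  Integrating them
   against [e^(-alpha t)] gives the balance equations [alpha pi = delta_(0,0) + pi Q], and
   [0 <= p <= 1] bounds every [pi_x] by [2 / Re alpha].  On the levels [j >= c] all servers
   work on class 2, so the balance equations become the second-order recurrence
     [c mu2 pi_(i,j+1) - (alpha + l1 + l2 + c mu2) pi_(i,j) + l2 pi_(i,j-1) = - l1 pi_(i-1,j)]
   in [j], whose characteristic roots are [r2] and [1 / phi2], with [|r2| < 1 < |1 / phi2|].
   The claimed formula satisfies the same recurrence (Pascal's rule for the binomial
   coefficients and a telescoping identity for the [v_(i,k)]), is bounded in [j] and agrees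
   with [pi] at level [c - 1].  By induction on [i], the difference is a bounded solution of the
   homogeneous recurrence vanishing at [j = 0], hence zero. *)

(** * Finite sums *)

Fixpoint rsum (f : nat -> R) (n : nat) : R :=
  match n with O => 0 | S k => rsum f k + f k end.

Lemma rsum_ext f g n : (forall k, (k < n)%nat -> f k = g k) -> rsum f n = rsum g n.
Proof.
  induction n as [|n IH]; intros H; simpl; [reflexivity|].
  rewrite IH, H by (try intros; try apply H; lia); reflexivity.
Qed.

Lemma rsum_plus f g n : rsum (fun k => f k + g k) n = rsum f n + rsum g n.
Proof. induction n as [|n IH]; simpl; [ring|rewrite IH; ring]. Qed.

Lemma rsum_scal a f n : rsum (fun k => a * f k) n = a * rsum f n.
Proof. induction n as [|n IH]; simpl; [ring|rewrite IH; ring]. Qed.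

Lemma rsum_swap (f : nat -> nat -> R) n m :
  rsum (fun i => rsum (fun j => f i j) m) n = rsum (fun j => rsum (fun i => f i j) n) m.
Proof.
  induction n as [|n IH]; simpl.
  - induction m as [|m IHm]; simpl; [reflexivity|rewrite <- IHm; ring].
  - rewrite IH, <- rsum_plus. reflexivity.
Qed.

Lemma rsum_telescope h n : rsum (fun k => h (S k) - h k) n = h n - h O.
Proof. induction n as [|n IH]; simpl; [ring|rewrite IH; ring]. Qed.

Lemma rsum_zero f n : (forall k, (k < n)%nat -> f k = 0) -> rsum f n = 0.
Proof.
  intros H; rewrite (rsum_ext f (fun _ => 0)) by exact H; clear H.
  induction n as [|n IH]; simpl; [reflexivity|rewrite IH; ring].
Qed.

Lemma rsum_nonneg f n : (forall k, 0 <= f k) -> 0 <= rsum f n.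
Proof. intros H; induction n as [|n IH]; simpl; [lra|]. pose proof (H n); lra. Qed.

Lemma rsum_ge_term f n k : (forall k, 0 <= f k) -> (k < n)%nat -> f k <= rsum f n.
Proof.
  intros H; induction n as [|n IH]; intros Hk; [lia|]. simpl.
  destruct (Nat.eq_dec k n) as [->|Hne].
  - pose proof (rsum_nonneg f n H); lra.
  - pose proof (H n); assert (f k <= rsum f n) by (apply IH; lia); lra.
Qed.

Definition prev (g : nat -> R) (k : nat) : R :=
  match k with O => 0 | S k' => g k' end.

Lemma rsum_prev_minus g n : rsum (fun k => prev g k - g k) n = - prev g n.
Proof.
  rewrite (rsum_ext _ (fun k => -1 * (prev g (S k) - prev g k))) by (intros; simpl; ring).
  rewrite rsum_scal, rsum_telescope. simpl. ring.
Qed.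

Definition lincomb {T : Type} (ts : list (R * T)) (g : T -> R) : R :=
  fold_right (fun t acc => fst t * g (snd t) + acc) 0 ts.

Section Lincomb.
Context {T : Type}.
Implicit Types (ts : list (R * T)).

Lemma lincomb_ext ts g h : (forall x, g x = h x) -> lincomb ts g = lincomb ts h.
Proof. intros H; induction ts as [|t ts IH]; simpl; [reflexivity|rewrite H, IH; reflexivity]. Qed.

Lemma lincomb_scal ts k g : lincomb ts (fun x => k * g x) = k * lincomb ts g.
Proof. induction ts as [|t ts IH]; simpl; [ring|rewrite IH; ring]. Qed.

Lemma lincomb_continuous ts (g : T -> R -> R) t :
  (forall x, continuous (g x) t) -> continuous (fun s => lincomb ts (fun x => g x s)) t.
Proof.
  intros Hg; induction ts as [|[k x] ts IH]; simpl; [apply continuous_const|].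
  apply (continuous_plus (fun s => k * g x s)); [|exact IH].
  apply (continuous_scal_r k (g x)), Hg.
Qed.

Lemma lincomb_ex_RInt ts (g : T -> R -> R) a b :
  (forall x, ex_RInt (g x) a b) -> ex_RInt (fun s => lincomb ts (fun x => g x s)) a b.
Proof.
  intros Hg; induction ts as [|[k x] ts IH]; simpl; [apply ex_RInt_const|].
  apply (ex_RInt_plus (fun s => k * g x s)); [|exact IH].
  apply (ex_RInt_scal (g x)), Hg.
Qed.

Lemma lincomb_RInt ts (g : T -> R -> R) a b :
  (forall x, ex_RInt (g x) a b) ->
  RInt (fun s => lincomb ts (fun x => g x s)) a b = lincomb ts (fun x => RInt (g x) a b).
Proof.
  intros Hg; induction ts as [|[k x] ts IH]; simpl.
  - rewrite RInt_const. apply Rmult_0_r.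
  - assert (Hk : RInt (fun s => k * g x s) a b = k * RInt (g x) a b)
      by exact (RInt_scal (g x) a b k (Hg x)).
    rewrite (RInt_plus (fun s => k * g x s)), IH, <- Hk; [reflexivity| |].
    + apply (ex_RInt_scal (g x)), Hg.
    + apply lincomb_ex_RInt, Hg.
Qed.

Lemma lincomb_is_lim_seq ts (u : T -> nat -> R) (l : T -> R) :
  (forall x, is_lim_seq (u x) (l x)) ->
  is_lim_seq (fun n => lincomb ts (fun x => u x n)) (lincomb ts l).
Proof.
  intros Hu; induction ts as [|[k x] ts IH]; simpl; [apply is_lim_seq_const|].
  apply is_lim_seq_plus'; [|exact IH].
  apply (is_lim_seq_scal_l (u x) k (l x)), Hu.
Qed.

Lemma lincomb_ex_pseries ts (a : T -> nat -> R) t :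
  (forall x, ex_pseries (a x) t) -> ex_pseries (fun n => lincomb ts (fun x => a x n)) t.
Proof.
  intros Ha; induction ts as [|[k x] ts IH]; simpl.
  - apply (ex_pseries_ext (fun _ => 0)); [reflexivity|].
    apply CV_radius_inside. rewrite CV_radius_const_0. exact I.
  - apply (ex_pseries_plus (PS_scal k (a x))); [|exact IH].
    apply ex_pseries_scal; [apply Rmult_comm|apply Ha].
Qed.

Lemma lincomb_PSeries ts (a : T -> nat -> R) t :
  (forall x, ex_pseries (a x) t) ->
  PSeries (fun n => lincomb ts (fun x => a x n)) t = lincomb ts (fun x => PSeries (a x) t).
Proof.
  intros Ha; induction ts as [|[k x] ts IH]; simpl; [apply PSeries_const_0|].
  transitivity (PSeries (PS_plus (PS_scal k (a x)) (fun n => lincomb ts (fun y => a y n))) t).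
  { apply PSeries_ext. reflexivity. }
  rewrite PSeries_plus, PSeries_scal, IH; [reflexivity| |].
  - apply ex_pseries_scal; [apply Rmult_comm|apply Ha].
  - apply lincomb_ex_pseries, Ha.
Qed.

End Lincomb.

(** * Analysis on the half-line *)

Lemma CV_disk_exp x : CV_disk (fun n => / INR (fact n)) x.
Proof.
  unfold CV_disk. eapply ex_series_ext; [|exists (exp (Rabs x)); apply is_exp_Reals].
  intros n. change (pow_n (Rabs x) n * / INR (fact n) = Rabs (/ INR (fact n) * x ^ n)).
  rewrite pow_n_pow, Rabs_mult, RPow_abs, (Rabs_pos_eq (/ _)); [apply Rmult_comm|].
  left. apply Rinv_0_lt_compat, lt_0_INR, lt_O_fact.
Qed.

Lemma CV_radius_infinite (a : nat -> R) :
  (forall x, CV_disk a x) -> forall x, Rbar_lt (Rabs x) (CV_radius a).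
Proof.
  intros H x. pose proof (CV_radius_ge_0 a) as H0.
  destruct (CV_radius a) as [r| |] eqn:E; simpl in *; auto.
  destruct (Rlt_dec (Rabs x) r) as [Hl|Hl]; auto. exfalso.
  apply (CV_disk_outside a (r + 1)).
  - rewrite E. simpl. rewrite Rabs_pos_eq; lra.
  - apply is_lim_seq_abs_0, ex_series_lim_0, H.
Qed.

Lemma is_derive_continuous (f f' : R -> R) :
  (forall t, is_derive f t (f' t)) -> forall t, continuous f t.
Proof.
  intros Hf t. apply (ex_derive_continuous (K := R_AbsRing) (V := R_NormedModule)).
  eexists. apply Hf.
Qed.

Lemma is_lim_seq_exp_decay a : 0 < a -> is_lim_seq (fun n => exp (- (a * INR n))) 0.
Proof.
  intros Ha. apply is_lim_seq_ext with (fun n => exp (- a) ^ n).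
  - intros n; induction n as [|n IH]; simpl pow.
    + rewrite Rmult_0_r, Ropp_0, exp_0. reflexivity.
    + rewrite IH, <- exp_plus, S_INR. f_equal. ring.
  - apply is_lim_seq_geom. rewrite Rabs_pos_eq by (left; apply exp_pos).
    rewrite <- exp_0. apply exp_increasing. lra.
Qed.

Lemma is_lim_seq_exp_dominated (u : R -> R) a : 0 < a ->
  (forall t, 0 <= t -> Rabs (u t) <= exp (- (a * t))) -> is_lim_seq (fun n => u (INR n)) 0.
Proof.
  intros Ha H.
  apply is_lim_seq_le_le with (fun n => - exp (- (a * INR n))) (fun n => exp (- (a * INR n))).
  - intros n. apply Rabs_le_between, H, pos_INR.
  - rewrite <- Ropp_0. apply (is_lim_seq_opp _ (Finite 0)), is_lim_seq_exp_decay, Ha.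
  - apply is_lim_seq_exp_decay, Ha.
Qed.

Lemma RInt_exp_dominated (u : R -> R) a B : 0 < a -> 0 <= B -> (forall t, continuous u t) ->
  (forall t, 0 <= t -> Rabs (u t) <= exp (- (a * t))) -> Rabs (RInt u 0 B) <= / a.
Proof.
  intros Ha HB Hc H.
  set (e := fun t => exp (- (a * t))).
  assert (He : is_RInt e 0 B (/ a - exp (- (a * B)) / a)).
  { replace (/ a - exp (- (a * B)) / a) with (minus (- e B / a) (- e 0 / a))
      by (unfold e, minus, plus, opp; simpl; rewrite Rmult_0_r, Ropp_0, exp_0; field; lra).
    apply (is_RInt_derive (fun t => - e t / a)); intros x _.
    - unfold e. auto_derive; auto. field. lra.
    - apply (ex_derive_continuous (K := R_AbsRing) (V := R_NormedModule)).
      unfold e. auto_derive. exact I. }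
  pose proof (exp_pos (- (a * B))). pose proof (Rinv_0_lt_compat a Ha).
  assert (HeB : exp (- (a * B)) / a > 0) by (apply Rmult_lt_0_compat; auto).
  assert (Hle : Rabs (RInt u 0 B) <= RInt e 0 B).
  { assert (Hu : ex_RInt u 0 B) by (apply (ex_RInt_continuous (V := R_CompleteNormedModule)); auto).
    assert (Hopp : RInt (fun t => - e t) 0 B = - RInt e 0 B)
      by (apply (RInt_opp e); eexists; exact He).
    apply Rabs_le_between. rewrite <- Hopp. split; apply RInt_le; auto.
    all: try (eexists; exact He).
    all: try (apply (ex_RInt_opp e); eexists; exact He).
    all: intros t Ht; destruct (proj1 (Rabs_le_between _ _) (H t ltac:(lra))); unfold e; lra. }
  rewrite (is_RInt_unique _ _ _ _ He) in Hle. unfold Rdiv in *. lra.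
Qed.

Lemma is_RInt_gen_parts (F : R -> C) (v : C) :
  is_RInt_gen F (at_point 0) (Rbar_locally p_infty) v ->
  is_lim_seq (fun n => RInt (fun t => fst (F t)) 0 (INR n)) (fst v) /\
  is_lim_seq (fun n => RInt (fun t => snd (F t)) 0 (INR n)) (snd v).
Proof.
  intros H.
  assert (K : forall eps : posreal, exists N : nat, forall n, (N <= n)%nat ->
     Rabs (RInt (fun t => fst (F t)) 0 (INR n) - fst v) < eps /\
     Rabs (RInt (fun t => snd (F t)) 0 (INR n) - snd v) < eps).
  { intros eps.
    destruct (H (ball v eps) (locally_ball v eps)) as [Q R0 HQ [M HM] HP].
    destruct (INR_archimed 1 M) as [N HN]; [lra|].
    exists N. intros n Hn.
    assert (HnM : M < INR n) by (apply le_INR in Hn; lra).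
    destruct (HP 0 (INR n) HQ (HM _ HnM)) as [y [Hy [Hb1 Hb2]]].
    pose proof (is_RInt_fct_extend_fst (U := R_NormedModule) (V := R_NormedModule)
                  F 0 (INR n) y Hy) as Hf.
    pose proof (is_RInt_fct_extend_snd (U := R_NormedModule) (V := R_NormedModule)
                  F 0 (INR n) y Hy) as Hs.
    apply (is_RInt_unique (V := R_CompleteNormedModule)) in Hf, Hs.
    change (RInt (fun t => @fst R R (F t)) 0 (INR n) = @fst R R y) in Hf.
    change (RInt (fun t => @snd R R (F t)) 0 (INR n) = @snd R R y) in Hs.
    rewrite Hf, Hs. split; assumption. }
  split; apply is_lim_seq_spec; intros eps; destruct (K eps) as [N HN];
    exists N; intros n Hn; apply HN; exact Hn.
Qed.

Definition kernel_re (a b t : R) : R := exp (- (a * t)) * cos (b * t).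
Definition kernel_im (a b t : R) : R := - (exp (- (a * t)) * sin (b * t)).

Lemma Cexp_kernel (alpha : C) t g :
  Cmult (Cexp (Copp (Cmult alpha (RtoC t)))) (RtoC g) =
  (kernel_re (fst alpha) (snd alpha) t * g, kernel_im (fst alpha) (snd alpha) t * g).
Proof.
  destruct alpha as [a b]. unfold Cmult, Cexp, Copp, RtoC, kernel_re, kernel_im; simpl.
  replace (- (a * t - b * 0)) with (- (a * t)) by ring.
  replace (- (a * 0 + b * t)) with (- (b * t)) by ring.
  rewrite cos_neg, sin_neg. f_equal; ring.
Qed.

Lemma kernel_re_derive a b t :
  is_derive (kernel_re a b) t (- a * kernel_re a b t + b * kernel_im a b t).
Proof. unfold kernel_re, kernel_im. auto_derive; auto. ring. Qed.

Lemma kernel_im_derive a b t :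
  is_derive (kernel_im a b) t (- a * kernel_im a b t + - b * kernel_re a b t).
Proof. unfold kernel_re, kernel_im. auto_derive; auto. ring. Qed.

Lemma Rabs_exp_mult_le (a t s : R) : Rabs s <= 1 -> Rabs (exp (- (a * t)) * s) <= exp (- (a * t)).
Proof.
  intros Hs. rewrite Rabs_mult, Rabs_pos_eq by (left; apply exp_pos).
  pose proof (exp_pos (- (a * t))). pose proof (Rabs_pos s). nra.
Qed.

Lemma kernel_re_bound a b t : Rabs (kernel_re a b t) <= exp (- (a * t)).
Proof. apply Rabs_exp_mult_le, Rabs_le. pose proof (COS_bound (b * t)). lra. Qed.

Lemma kernel_im_bound a b t : Rabs (kernel_im a b t) <= exp (- (a * t)).
Proof.
  unfold kernel_im. rewrite Rabs_Ropp. apply Rabs_exp_mult_le, Rabs_le.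
  pose proof (SIN_bound (b * t)). lra.
Qed.

(** * Complex sums, binomial coefficients and recurrences *)

Section ComplexSums.
Local Open Scope C_scope.
Implicit Types (f g : nat -> C).

Lemma Csum_ext f g a b : (forall k, (a <= k <= b)%nat -> f k = g k) -> Csum f a b = Csum g a b.
Proof.
  intros H. unfold Csum. f_equal. apply map_ext_in.
  intros k Hk. apply in_seq in Hk. apply H. lia.
Qed.

Lemma Csum_plus f g a b : Csum (fun k => f k + g k) a b = Csum f a b + Csum g a b.
Proof. unfold Csum. induction (seq a (S b - a)); simpl; [ring|rewrite IHl; ring]. Qed.

Lemma Csum_scal f z a b : Csum (fun k => z * f k) a b = z * Csum f a b.
Proof. unfold Csum. induction (seq a (S b - a)); simpl; [ring|rewrite IHl; ring]. Qed.

Lemma Csum_zero f a b : (forall k, (a <= k <= b)%nat -> f k = 0) -> Csum f a b = 0.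
Proof.
  intros H. rewrite (Csum_ext f (fun k => 0 * f k)) by (intros k Hk; rewrite H by exact Hk; ring).
  rewrite Csum_scal. ring.
Qed.

Lemma Csum_nil f a b : (b < a)%nat -> Csum f a b = 0.
Proof. intros H. unfold Csum. replace (S b - a)%nat with 0%nat by lia. reflexivity. Qed.

Lemma Csum_cons f a b : (a <= b)%nat -> Csum f a b = f a + Csum f (S a) b.
Proof. intros H. unfold Csum. replace (S b - a)%nat with (S (S b - S a)) by lia. reflexivity. Qed.

Lemma Csum_shift f a b : Csum f (S a) (S b) = Csum (fun k => f (S k)) a b.
Proof.
  unfold Csum. replace (S (S b) - S a)%nat with (S b - a)%nat by lia.
  rewrite <- seq_shift, map_map. reflexivity.
Qed.

Lemma Csum_recr f a b : (a <= S b)%nat -> Csum f a (S b) = Csum f a b + f (S b).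
Proof.
  intros Hab. remember (S b - a)%nat as d eqn:Hd. revert a Hd Hab.
  induction d as [|d IH]; intros a Hd Hab.
  - replace a with (S b) by lia. rewrite Csum_cons, !Csum_nil by lia. ring.
  - rewrite (Csum_cons f a (S b)), (Csum_cons f a b) by lia.
    destruct (Nat.eq_dec a b) as [->|Hne].
    + rewrite Csum_cons, !Csum_nil by lia. ring.
    + rewrite IH by lia. ring.
Qed.

Lemma Csum_telescope (h : nat -> C) m n : (m <= S n)%nat ->
  Csum (fun k => h k - h (S k)) m n = h m - h (S n).
Proof.
  intros Hm. remember (S n - m)%nat as d eqn:Hd. revert m Hd Hm.
  induction d as [|d IH]; intros m Hd Hm.
  - replace m with (S n) by lia. rewrite Csum_nil by lia. ring.
  - rewrite Csum_cons, IH by lia. ring.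
Qed.

Lemma Csum_swap (X y : nat -> C) n :
  Csum (fun k => X k * Csum y 0 k) 0 n = Csum (fun m => y m * Csum X m n) 0 n.
Proof.
  induction n as [|n IH].
  - unfold Csum; simpl; ring.
  - rewrite Csum_recr, IH, (Csum_recr _ 0 n) by lia.
    rewrite (Csum_ext (fun m => y m * Csum X m (S n)) (fun m => y m * Csum X m n + X (S n) * y m))
      by (intros k Hk; rewrite Csum_recr by lia; ring).
    rewrite Csum_plus, Csum_scal, (Csum_recr _ 0 n), (Csum_nil X (S n) n) by lia.
    rewrite (Csum_recr y 0 n) by lia. ring.
Qed.

Lemma Csum_bounded (F : nat -> nat -> C) n :
  (forall k, exists M, forall j, Cmod (F k j) <= M) ->
  exists M, forall j, Cmod (Csum (fun k => F k j) 0 n) <= M.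
Proof.
  intros H. induction n as [|n [M HM]].
  - destruct (H 0%nat) as [M HM]. exists M. intros j. unfold Csum. simpl.
    rewrite Cplus_0_r. apply HM.
  - destruct (H (S n)) as [M' HM']. exists (M + M')%R. intros j.
    rewrite Csum_recr by lia. eapply Rle_trans; [apply Cmod_triangle|].
    apply Rplus_le_compat; auto.
Qed.

End ComplexSums.

(* [negbin j k] is the coefficient of [z ^ k] in [(1 - z) ^ (- j)], i.e. the binomial
   coefficient [C (j - 1 + k) k] for [j >= 1]; the case [j = 0] is what makes Pascal's
   rule [negbin_SS] hold with no side condition. *)
Fixpoint negbin (j : nat) : nat -> R :=
  match j with
  | O => fun k => match k with O => 1 | S _ => 0 end
  | S j' => fix g (k : nat) : R := match k with O => 1 | S k' => negbin j' (S k') + g k' end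
  end.

Lemma negbin_SS j k : negbin (S j) (S k) = negbin j (S k) + negbin (S j) k.
Proof. reflexivity. Qed.

Lemma negbin_0 j : negbin j 0 = 1.
Proof. destruct j; reflexivity. Qed.

Lemma negbin_binomial j k : Binomial.C (j + k) k = negbin (S j) k.
Proof.
  assert (Hn : forall n, Binomial.C n n = 1 /\ Binomial.C n 0 = 1).
  { intros n. unfold Binomial.C. rewrite Nat.sub_diag, Nat.sub_0_r.
    pose proof (not_0_INR _ (fact_neq_0 n)). simpl. split; field; auto. }
  revert k; induction j as [|j IHj]; intros k.
  - rewrite Nat.add_0_l, (proj1 (Hn k)).
    induction k as [|k IHk]; [reflexivity|]. rewrite negbin_SS, <- IHk. simpl. ring.
  - induction k as [|k IHk].
    + rewrite Nat.add_0_r, (proj2 (Hn _)). reflexivity.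
    + rewrite negbin_SS, <- IHk, <- IHj.
      replace (S j + S k)%nat with (S (S j + k)) by lia.
      rewrite <- pascal by lia. replace (j + S k)%nat with (S j + k)%nat by lia. ring.
Qed.

Lemma negbin_nonneg j k : 0 <= negbin j k.
Proof.
  revert k; induction j as [|j IHj]; intros k.
  - destruct k; simpl; lra.
  - induction k as [|k IHk]; [rewrite negbin_0; lra|].
    rewrite negbin_SS. specialize (IHj (S k)). lra.
Qed.

Lemma negbin_partial_sum j k : RtoC (negbin (S j) k) = Csum (fun m => RtoC (negbin j m)) 0 k.
Proof.
  induction k as [|k IHk].
  - rewrite Csum_cons, Csum_nil by lia. rewrite !negbin_0, <- RtoC_plus. f_equal; ring.
  - rewrite Csum_recr by lia. rewrite <- IHk, negbin_SS, RtoC_plus. ring.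
Qed.

Lemma negbin_geom_bounded (q : R) k : 0 <= q < 1 -> exists M, forall j, negbin j k * q ^ j <= M.
Proof.
  intros Hq. induction k as [|k [M HM]].
  - exists 1. intros j. rewrite negbin_0, Rmult_1_l, <- (pow1 j). apply pow_incr. lra.
  - assert (HM0 : 0 <= M)
      by (specialize (HM 0%nat); pose proof (negbin_nonneg 0 k); rewrite pow_O in HM; lra).
    exists (M / (1 - q)). intros j. induction j as [|j IHj].
    + simpl. rewrite Rmult_0_l. apply Rmult_le_pos; [lra|left; apply Rinv_0_lt_compat; lra].
    + rewrite negbin_SS. specialize (HM (S j)). simpl pow in *.
      assert (q * (negbin j (S k) * q ^ j) <= q * (M / (1 - q))) by (apply Rmult_le_compat_l; lra).
      assert (E : q * (M / (1 - q)) + M = M / (1 - q)) by (field; lra).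
      nra.
Qed.

Section Recurrence.
Local Open Scope C_scope.

Lemma bounded_geometric_zero (E : nat -> C) (phi : C) (M : R) :
  Cmod phi < 1 -> (forall j, E j = phi * E (S j)) -> (forall j, Cmod (E j) <= M) ->
  forall j, E j = 0.
Proof.
  intros Hphi HE HM j. apply Cmod_eq_0.
  assert (Hpow : forall n, Cmod (E j) <= (Cmod phi ^ n * M)%R).
  { intros n. replace (E j) with (phi ^ n * E (n + j)%nat).
    - rewrite Cmod_mult, Cmod_pow. apply Rmult_le_compat_l; [apply pow_le, Cmod_ge_0|apply HM].
    - induction n as [|n IH]; [cbn [Cpow Nat.add]; ring|].
      rewrite <- IH, (HE (n + j)%nat). cbn [Cpow Nat.add]. ring. }
  assert (Hlim : is_lim_seq (fun n => (Cmod phi ^ n * M)%R) 0).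
  { replace (Finite 0) with (Rbar_mult 0 M) by (simpl; f_equal; ring).
    apply is_lim_seq_scal_r, is_lim_seq_geom.
    rewrite Rabs_pos_eq by apply Cmod_ge_0. exact Hphi. }
  pose proof (is_lim_seq_le _ _ (Cmod (E j)) 0 Hpow (is_lim_seq_const _) Hlim) as Hle.
  pose proof (Cmod_ge_0 (E j)). simpl in Hle. lra.
Qed.

(* With [mu r = lam phi], the characteristic roots of the recurrence are [r] and [1 / phi]. *)
Lemma recurrence_factor (lam mu w r phi : C) (D : nat -> C) j :
  mu <> 0 -> mu * r = lam * phi -> lam * phi * phi - w * phi + mu = 0 ->
  mu * D (S (S j)) - w * D (S j) + lam * D j = 0 ->
  phi * (D (S (S j)) - r * D (S j)) = D (S j) - r * D j.
Proof.
  intros Hmu Hr Hphi Hrec.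
  set (X := phi * (D (S (S j)) - r * D (S j)) - (D (S j) - r * D j)).
  assert (HX : mu * X = 0).
  { transitivity (phi * (mu * D (S (S j)) - w * D (S j) + lam * D j)
                  - D (S j) * (lam * phi * phi - w * phi + mu)
                  + (D j - phi * D (S j)) * (mu * r - lam * phi)); [unfold X; ring|].
    rewrite Hrec, Hphi, Hr. ring. }
  apply Ceq_minus. change (X = 0). transitivity (/ mu * (mu * X)); [field; exact Hmu|].
  rewrite HX. ring.
Qed.

Lemma recurrence_difference (lam mu w z : C) (P Q : nat -> C) j :
  mu * P (S (S j)) - w * P (S j) + lam * P j = z ->
  mu * Q (S (S j)) - w * Q (S j) + lam * Q j = z ->
  mu * (P (S (S j)) - Q (S (S j))) - w * (P (S j) - Q (S j)) + lam * (P j - Q j) = 0.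
Proof.
  intros HP HQ.
  transitivity ((mu * P (S (S j)) - w * P (S j) + lam * P j)
                - (mu * Q (S (S j)) - w * Q (S j) + lam * Q j)); [ring|].
  rewrite HP, HQ. ring.
Qed.

Lemma bounded_recurrence_zero (lam mu w r phi : C) (D : nat -> C) (M : R) :
  mu <> 0 -> mu * r = lam * phi -> lam * phi * phi - w * phi + mu = 0 -> Cmod phi < 1 ->
  (forall j, mu * D (S (S j)) - w * D (S j) + lam * D j = 0) ->
  D O = 0 -> (forall j, Cmod (D j) <= M) -> forall j, D j = 0.
Proof.
  intros Hmu Hr Hphi Hphi1 Hrec HD0 HM.
  assert (HE : forall j, D (S j) - r * D j = 0).
  { apply (bounded_geometric_zero _ phi (M + Cmod r * M)); [exact Hphi1| |].
    - intros j. symmetry. apply (recurrence_factor lam mu w); auto.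
    - intros j. eapply Rle_trans; [apply Cmod_triangle|]. rewrite Cmod_opp, Cmod_mult.
      pose proof (Cmod_ge_0 r). apply Rplus_le_compat; [apply HM|apply Rmult_le_compat_l; auto]. }
  induction j as [|j IH]; [exact HD0|].
  specialize (HE j). apply Ceq_minus in HE. rewrite HE, IH. ring.
Qed.

End Recurrence.

(** * The busy-period transform *)

Lemma RtoC_neq_0 (x : R) : x <> 0 -> RtoC x <> RtoC 0.
Proof. intros H E. injection E. exact H. Qed.

Lemma Cmod_sqr (z : C) : Cmod z * Cmod z = fst z * fst z + snd z * snd z.
Proof. unfold Cmod. rewrite sqrt_sqrt; [ring|nra]. Qed.

Lemma Csqrt_sqr (z : C) : Cmult (Csqrt z) (Csqrt z) = z.
Proof.
  destruct z as [x y]. unfold Csqrt. simpl fst; simpl snd.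
  set (r := Cmod (x, y)).
  assert (Hr : r * r = x * x + y * y) by apply (Cmod_sqr (x, y)).
  assert (Hx : Rabs x <= r) by apply (re_le_Cmod (x, y)).
  apply Rabs_le_between in Hx.
  assert (HA : sqrt ((r + x) / 2) * sqrt ((r + x) / 2) = (r + x) / 2) by (apply sqrt_sqrt; lra).
  assert (HB : sqrt ((r - x) / 2) * sqrt ((r - x) / 2) = (r - x) / 2) by (apply sqrt_sqrt; lra).
  assert (HAB : sqrt ((r + x) / 2) * sqrt ((r - x) / 2) = Rabs y / 2).
  { rewrite <- sqrt_mult by lra.
    replace ((r + x) / 2 * ((r - x) / 2)) with ((Rabs y / 2) * (Rabs y / 2)).
    - apply sqrt_square. pose proof (Rabs_pos y); lra.
    - replace (Rabs y / 2 * (Rabs y / 2)) with ((Rabs y * Rabs y) / 4) by field.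
      rewrite <- Rabs_mult, Rabs_pos_eq by nra. nra. }
  destruct (Rlt_dec y 0) as [Hy|Hy]; unfold Cmult; apply injective_projections; simpl.
  - lra.
  - rewrite Rabs_left in HAB by lra. nra.
  - lra.
  - rewrite Rabs_pos_eq in HAB by lra. nra.
Qed.

Section BusyPeriod.
Variables (lam mu : R) (s : C).
Hypotheses (Hlam : 0 < lam) (Hmu : 0 < mu) (Hs : 0 < fst s).

Let w : C := Cplus (RtoC (lam + mu)) s.
Let sigma : C := Csqrt (Cminus (Cmult w w) (RtoC (4 * lam * mu))).

(* With [w = p + i q], [Z = w^2 - 4 lam mu] and [D = (lam - mu)^2]:
   [|Z|^2 - (2 D - Re Z)^2 = 4 q^2 (p^2 - D) + 4 D (p^2 - (lam + mu)^2) >= 0] as [p >= lam + mu],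
   so [Re (sqrt Z) = sqrt ((|Z| + Re Z) / 2) >= sqrt D]. *)
Lemma busy_sqrt_re : Rabs (lam - mu) <= fst sigma.
Proof.
  set (Z := Cminus (Cmult w w) (RtoC (4 * lam * mu))).
  change (fst sigma) with (sqrt ((Cmod Z + fst Z) / 2)).
  set (p := fst w). set (q := snd w).
  assert (Hp : p = lam + mu + fst s) by (unfold p, w; simpl; ring).
  assert (HZ1 : fst Z = p * p - q * q - 4 * lam * mu) by (unfold Z, p, q; simpl; ring).
  assert (HZ2 : snd Z = 2 * p * q) by (unfold Z, p, q; simpl; ring).
  set (D := (lam - mu) * (lam - mu)).
  pose proof (Cmod_sqr Z) as HC. pose proof (Cmod_ge_0 Z).
  assert (Hpp : (lam + mu) * (lam + mu) <= p * p) by (apply Rmult_le_compat; lra).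
  assert (HD : 0 <= D <= (lam + mu) * (lam + mu))
    by (unfold D; split; [apply Rle_0_sqr|pose proof (Rmult_lt_0_compat lam mu Hlam Hmu); nra]).
  assert (K1 : 0 <= q * q * (p * p - D)) by (apply Rmult_le_pos; nra).
  assert (K2 : 0 <= D * (p * p - (lam + mu) * (lam + mu))) by (apply Rmult_le_pos; lra).
  assert (Hmain : 2 * D - fst Z <= Cmod Z).
  { destruct (Rle_dec (2 * D - fst Z) 0) as [Hn|Hn]; [lra|].
    assert (E : Cmod Z * Cmod Z - (2 * D - fst Z) * (2 * D - fst Z) =
      4 * (q * q * (p * p - D)) + 4 * (D * (p * p - (lam + mu) * (lam + mu))))
      by (rewrite HC, HZ1, HZ2; unfold D; ring).
    nra. }
  rewrite <- sqrt_Rsqr_abs. apply sqrt_le_1_alt. unfold Rsqr. fold D. lra.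
Qed.

(* [(w - sigma) (w + sigma) = 4 lam mu] while [|w + sigma| >= Re (w + sigma) > 2 max lam mu]. *)
Lemma busy_numerator_bound : Cmod (Cminus w sigma) < 2 * lam /\ Cmod (Cminus w sigma) < 2 * mu.
Proof.
  assert (Hprod : Cmult (Cminus w sigma) (Cplus w sigma) = RtoC (4 * lam * mu)).
  { transitivity (Cminus (Cmult w w) (Cmult sigma sigma)); [ring|].
    unfold sigma. rewrite Csqrt_sqr. ring. }
  assert (Hbig : lam + mu + Rabs (lam - mu) < Cmod (Cplus w sigma)).
  { eapply Rlt_le_trans; [|apply Rle_trans with (Rabs (fst (Cplus w sigma)));
                            [apply Rle_abs|apply re_le_Cmod]].
    change (fst (Cplus w sigma)) with (fst w + fst sigma).
    assert (fst w = lam + mu + fst s) by (unfold w; simpl; ring).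
    pose proof busy_sqrt_re. lra. }
  assert (Hm : Cmod (Cminus w sigma) * Cmod (Cplus w sigma) = 4 * lam * mu).
  { rewrite <- Cmod_mult, Hprod, Cmod_R. apply Rabs_pos_eq. nra. }
  pose proof (Cmod_ge_0 (Cminus w sigma)).
  destruct (Rle_dec lam mu);
    [rewrite Rabs_left1 in Hbig by lra|rewrite Rabs_pos_eq in Hbig by lra]; split; nra.
Qed.

Lemma phiB_root :
  Cplus (Cminus (Cmult (RtoC lam) (Cmult (phiB lam mu s) (phiB lam mu s)))
                (Cmult w (phiB lam mu s))) (RtoC mu) = RtoC 0.
Proof.
  change (phiB lam mu s) with (Cdiv (Cminus w sigma) (RtoC (2 * lam))).
  assert (Hsq : Cmult sigma sigma = Cminus (Cmult w w) (RtoC (4 * lam * mu))) by apply Csqrt_sqr.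
  assert (H2 : RtoC lam <> RtoC 0) by (apply RtoC_neq_0; lra).
  transitivity (Cdiv (Cminus (Cmult sigma sigma) (Cminus (Cmult w w) (RtoC (4 * lam * mu))))
                     (RtoC (4 * lam))).
  - rewrite !RtoC_mult. field. exact H2.
  - rewrite Hsq. unfold Cminus. rewrite Cplus_opp_r. unfold Cdiv. apply Cmult_0_l.
Qed.

Lemma phiB_lt_1 : Cmod (phiB lam mu s) < 1.
Proof.
  change (phiB lam mu s) with (Cdiv (Cminus w sigma) (RtoC (2 * lam))).
  rewrite Cmod_div, Cmod_R, Rabs_pos_eq by (try apply RtoC_neq_0; lra).
  destruct busy_numerator_bound as [H _].
  apply (Rmult_lt_reg_r (2 * lam)); [lra|]. unfold Rdiv.
  rewrite Rmult_assoc, Rinv_l, Rmult_1_r by lra. lra.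
Qed.

Lemma phiB_scaled_lt_1 : Cmod (Cmult (RtoC (lam / mu)) (phiB lam mu s)) < 1.
Proof.
  change (phiB lam mu s) with (Cdiv (Cminus w sigma) (RtoC (2 * lam))).
  rewrite Cmod_mult, Cmod_div, !Cmod_R, !Rabs_pos_eq
    by (try apply RtoC_neq_0; try (unfold Rdiv; apply Rmult_le_pos); try left;
        try apply Rinv_0_lt_compat; lra).
  destruct busy_numerator_bound as [_ H].
  replace (lam / mu * (Cmod (Cminus w sigma) / (2 * lam))) with (Cmod (Cminus w sigma) / (2 * mu))
    by (field; lra).
  apply (Rmult_lt_reg_r (2 * mu)); [lra|]. unfold Rdiv.
  rewrite Rmult_assoc, Rinv_l, Rmult_1_r by lra. lra.
Qed.

End BusyPeriod.

(** * Uniformization and the forward equations *)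

Section Chain.
Variables (c : nat) (l1 l2 m1 m2 : R).
Hypotheses (Hl1 : 0 < l1) (Hl2 : 0 < l2) (Hm1 : 0 < m1) (Hm2 : 0 < m2).

Local Notation q := (qrate c l1 l2 m1 m2).
Local Notation qo := (qout c l1 l2 m1 m2).
Local Notation L := (Lam c l1 l2 m1 m2).
Local Notation d := (Defs.dist c l1 l2 m1 m2).
Local Notation p := (ptrans c l1 l2 m1 m2).

Definition dep1 (i j : nat) : R := INR (Nat.min i (c - j)) * m1.
Definition dep2 (j : nat) : R := INR (Nat.min c j) * m2.

Lemma dep1_bounds i j : 0 <= dep1 i j <= INR c * m1.
Proof.
  unfold dep1. split; [apply Rmult_le_pos; [apply pos_INR|lra]|].
  apply Rmult_le_compat_r; [lra|]. apply le_INR; lia.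
Qed.

Lemma dep2_bounds j : 0 <= dep2 j <= INR c * m2.
Proof.
  unfold dep2. split; [apply Rmult_le_pos; [apply pos_INR|lra]|].
  apply Rmult_le_compat_r; [lra|]. apply le_INR; lia.
Qed.

Ltac nat_tests := repeat match goal with |- context [Nat.eqb ?a ?b] =>
  destruct (Nat.eqb_spec a b); try (exfalso; lia) end.

Lemma qrate_nonneg x y : 0 <= q x y.
Proof.
  destruct x as [i j], y as [i' j']. unfold qrate.
  pose proof (pos_INR (Nat.min i (c - j))). pose proof (pos_INR (Nat.min c j)).
  repeat match goal with |- context [if ?b then _ else _] => destruct b end; nra.
Qed.

Lemma qout_eq i j : qo (i, j) = l1 + l2 + dep1 i j + dep2 j.
Proof.
  unfold qout, dep1, dep2, nbrs, Rsum_list, qrate.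
  destruct i as [|i], j as [|j]; cbn [map fold_right app]; nat_tests;
    cbn [andb]; rewrite ?Nat.min_0_l, ?Nat.min_0_r; simpl INR; ring.
Qed.

Lemma Lam_pos : 0 < L.
Proof. unfold Lam. pose proof (pos_INR c). nra. Qed.

Lemma qout_le_Lam y : qo y <= L.
Proof.
  destruct y as [i j]. rewrite qout_eq. unfold Lam.
  pose proof (dep1_bounds i j). pose proof (dep2_bounds j). lra.
Qed.

Definition inflow (y : state) : list (R * state) := map (fun x => (q x y, x)) (nbrs y).

(* [fwd g] is the row vector [g Q], [Q] the generator of the chain. *)
Definition fwd (g : state -> R) (y : state) : R := lincomb ((- qo y, y) :: inflow y) g.

Lemma fwd_ext g h y : (forall x, g x = h x) -> fwd g y = fwd h y.
Proof. apply lincomb_ext. Qed.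

Lemma fwd_scal k g y : fwd (fun x => k * g x) y = k * fwd g y.
Proof. apply lincomb_scal. Qed.

Lemma fwd_flux g i j :
  fwd g (i, j) =
    l1 * (prev (fun k => g (k, j)) i - g (i, j)) + l2 * (prev (fun k => g (i, k)) j - g (i, j))
    + (dep1 (S i) j * g (S i, j) - dep1 i j * g (i, j))
    + (dep2 (S j) * g (i, S j) - dep2 j * g (i, j)).
Proof.
  unfold fwd, inflow, lincomb. cbn [fold_right map fst snd]. rewrite qout_eq.
  unfold nbrs, dep1, dep2, qrate.
  destruct i as [|i], j as [|j]; cbn [map fold_right app fst snd prev]; nat_tests;
    cbn [andb]; rewrite ?Nat.min_0_l, ?Nat.min_0_r; simpl INR; ring.
Qed.

Lemma dist_succ n y : d (S n) y = d n y + fwd (d n) y / L.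
Proof.
  pose proof Lam_pos.
  change (d (S n) y) with
    (d n y * (1 - qo y / L) + Rsum_list (map (fun x => d n x * (q x y / L)) (nbrs y))).
  unfold fwd, inflow, lincomb. cbn [fold_right fst snd].
  assert (E : forall l : list state,
    Rsum_list (map (fun x => d n x * (q x y / L)) l) =
    fold_right (fun t acc => fst t * d n (snd t) + acc) 0 (map (fun x => (q x y, x)) l) / L).
  { induction l as [|x l IH]; simpl; [field; lra|]. rewrite IH. field. lra. }
  rewrite E. field. lra.
Qed.

Lemma dist_nonneg n y : 0 <= d n y.
Proof.
  pose proof Lam_pos as HL. revert y; induction n as [|n IH]; intros y.
  - simpl. destruct (_ && _)%bool; lra.
  - change (d (S n) y) with
      (d n y * (1 - qo y / L) + Rsum_list (map (fun x => d n x * (q x y / L)) (nbrs y))).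
    apply Rplus_le_le_0_compat.
    + replace (1 - qo y / L) with ((L - qo y) * / L) by (field; lra).
      pose proof (qout_le_Lam y). pose proof (Rinv_0_lt_compat L HL).
      apply Rmult_le_pos; [apply IH|apply Rmult_le_pos; lra].
    + induction (nbrs y) as [|x l IHl]; simpl; [lra|].
      apply Rplus_le_le_0_compat; [|exact IHl].
      pose proof (Rinv_0_lt_compat L HL). pose proof (qrate_nonneg x y).
      apply Rmult_le_pos; [apply IH|apply Rmult_le_pos; lra].
Qed.

Lemma dist_vanish n i j : (n < i + j)%nat -> d n (i, j) = 0.
Proof.
  revert i j; induction n as [|n IH]; intros i j Hn.
  - simpl. destruct i, j; simpl; [lia|reflexivity..].
  - rewrite dist_succ, fwd_flux, (IH i j), (IH (S i) j), (IH i (S j)) by lia.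
    destruct i as [|i], j as [|j]; simpl prev; rewrite ?IH by lia; field; apply Rgt_not_eq, Lam_pos.
Qed.

Definition box (g : state -> R) (N : nat) : R := rsum (fun i => rsum (fun j => g (i, j)) N) N.

Lemma box_fwd g N : (forall i j, (N <= S i)%nat \/ (N <= S j)%nat -> g (i, j) = 0) ->
  box (fwd g) N = 0.
Proof.
  intros Hg.
  assert (Hprev : forall h : nat -> R, h (pred N) = 0 -> prev h N = 0) by (destruct N; simpl; auto).
  unfold box.
  rewrite (rsum_ext _ (fun i =>
      l1 * rsum (fun j => prev (fun k => g (k, j)) i - g (i, j)) N
    + l2 * rsum (fun j => prev (fun k => g (i, k)) j - g (i, j)) N
    + rsum (fun j => dep1 (S i) j * g (S i, j) - dep1 i j * g (i, j)) N
    + rsum (fun j => dep2 (S j) * g (i, S j) - dep2 j * g (i, j)) N)).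
  2: { intros i _. rewrite <- !rsum_scal, <- !rsum_plus. apply rsum_ext. intros j _.
       apply fwd_flux. }
  rewrite !rsum_plus, !rsum_scal.
  rewrite (rsum_swap (fun i j => prev (fun k => g (k, j)) i - g (i, j))).
  rewrite (rsum_swap (fun i j => dep1 (S i) j * g (S i, j) - dep1 i j * g (i, j))).
  rewrite !(rsum_zero _ N); [ring|..]; intros k _.
  - rewrite (rsum_telescope (fun j => dep2 j * g (k, j))), Hg by lia.
    unfold dep2. rewrite Nat.min_0_r. simpl. ring.
  - rewrite (rsum_telescope (fun i => dep1 i k * g (i, k))), Hg by lia.
    unfold dep1. rewrite Nat.min_0_l. simpl. ring.
  - rewrite rsum_prev_minus, Hprev; [ring|apply Hg; lia].
  - rewrite rsum_prev_minus, Hprev; [ring|apply Hg; lia].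
Qed.

Lemma box_dist n N : (n < N)%nat -> box (d n) N = 1.
Proof.
  pose proof Lam_pos as HL. revert N; induction n as [|n IH]; intros N HN.
  - assert (Hdelta : forall f, (forall k, (0 < k)%nat -> f k = 0) -> rsum f N = f O).
    { intros f Hf. destruct N as [|N]; [lia|]. clear HN.
      induction N as [|N IHN]; simpl in *; [ring|]. rewrite IHN, (Hf (S N)) by lia. ring. }
    unfold box. rewrite Hdelta, Hdelta; [reflexivity| |].
    + intros k Hk. destruct k; [lia|reflexivity].
    + intros k Hk. apply rsum_zero. intros j _. destruct k; [lia|reflexivity].
  - unfold box.
    rewrite (rsum_ext _ (fun i => rsum (fun j => d n (i, j)) N
                                   + / L * rsum (fun j => fwd (d n) (i, j)) N)).
    2: { intros i _. rewrite <- rsum_scal, <- rsum_plus. apply rsum_ext. intros j _.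
         rewrite dist_succ. unfold Rdiv. ring. }
    rewrite rsum_plus, rsum_scal. fold (box (d n) N) (box (fwd (d n)) N).
    rewrite IH, box_fwd by (try intros; try apply dist_vanish; lia). ring.
Qed.

Lemma dist_le_1 n y : d n y <= 1.
Proof.
  destruct y as [i j]. rewrite <- (box_dist n (S (n + i + j))) by lia. unfold box.
  eapply Rle_trans; [|apply (rsum_ge_term _ _ i); [|lia]].
  - apply (rsum_ge_term (fun j => d n (i, j))); [intros; apply dist_nonneg|lia].
  - intros; apply rsum_nonneg; intros; apply dist_nonneg.
Qed.

(* The Taylor coefficients of [t |-> e^(L t) p_y(t)]. *)
Definition ptrans_coef (y : state) (n : nat) : R := L ^ n / INR (fact n) * d n y.

Lemma CV_disk_ptrans_coef y t : CV_disk (ptrans_coef y) t.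
Proof.
  refine (ex_series_le (V := R_CompleteNormedModule) _ _ _ (CV_disk_exp (L * t))).
  intros n.
  change (norm (Rabs (ptrans_coef y n * t ^ n))) with (Rabs (Rabs (ptrans_coef y n * t ^ n))).
  pose proof (dist_nonneg n y). pose proof (dist_le_1 n y).
  pose proof (Rinv_0_lt_compat _ (lt_0_INR _ (lt_O_fact n))). pose proof Lam_pos.
  unfold ptrans_coef.
  rewrite Rabs_Rabsolu, Rpow_mult_distr, !Rabs_mult, (Rabs_pos_eq (d n y)) by lra.
  rewrite (Rabs_pos_eq (L ^ n / _)) by (apply Rmult_le_pos; [apply pow_le|]; lra).
  rewrite (Rabs_pos_eq (/ _)), (Rabs_pos_eq (L ^ n)) by (try apply pow_le; lra).
  pose proof (Rabs_pos (t ^ n)). pose proof (pow_le L n ltac:(lra)). unfold Rdiv.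
  replace (/ INR (fact n) * (L ^ n * Rabs (t ^ n))) with (L ^ n * / INR (fact n) * 1 * Rabs (t ^ n))
    by ring.
  apply Rmult_le_compat_r; [lra|]. apply Rmult_le_compat_l; [apply Rmult_le_pos|]; lra.
Qed.

Lemma CV_radius_ptrans_coef y t : Rbar_lt (Rabs t) (CV_radius (ptrans_coef y)).
Proof. apply CV_radius_infinite, CV_disk_ptrans_coef. Qed.

Lemma ptrans_PSeries y t : p y t = exp (- (L * t)) * PSeries (ptrans_coef y) t.
Proof.
  unfold ptrans, PSeries. rewrite <- Series_scal_l. apply Series_ext. intros n.
  unfold ptrans_coef. rewrite Rpow_mult_distr. change (scal (pow_n t n) ?a) with (pow_n t n * a).
  unfold Rdiv. ring.
Qed.

Lemma PS_derive_ptrans_coef y n :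
  PS_derive (ptrans_coef y) n = L * ptrans_coef y n + fwd (fun x => ptrans_coef x n) y.
Proof.
  pose proof Lam_pos. pose proof (not_0_INR _ (fact_neq_0 n)).
  unfold PS_derive, ptrans_coef. rewrite fwd_scal, dist_succ, fact_simpl, mult_INR.
  simpl pow. field. split; [|split]; auto; [lra|apply not_0_INR; lia].
Qed.

Lemma forward_equation y t : is_derive (p y) t (fwd (fun x => p x t) y).
Proof.
  set (e := fun t => exp (- (L * t))). set (P := PSeries (ptrans_coef y)).
  set (P' := L * P t + fwd (fun x => PSeries (ptrans_coef x) t) y).
  assert (Hex : forall x, ex_pseries (ptrans_coef x) t)
    by (intros; apply CV_radius_inside, CV_radius_ptrans_coef).
  assert (HdP : is_derive P t P').
  { replace P' with (PSeries (PS_derive (ptrans_coef y)) t).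
    - apply is_derive_PSeries, CV_radius_ptrans_coef.
    - transitivity (PSeries (PS_plus (PS_scal L (ptrans_coef y))
                                     (fun n => fwd (fun x => ptrans_coef x n) y)) t).
      + apply PSeries_ext. apply PS_derive_ptrans_coef.
      + assert (Hs : ex_pseries (PS_scal L (ptrans_coef y)) t)
          by (apply ex_pseries_scal; [apply Rmult_comm|apply Hex]).
        assert (Hl : ex_pseries (fun n => fwd (fun x => ptrans_coef x n) y) t)
          by (apply lincomb_ex_pseries; exact Hex).
        rewrite (PSeries_plus _ _ _ Hs Hl), PSeries_scal.
        unfold fwd. rewrite lincomb_PSeries by exact Hex. reflexivity. }
  assert (Hde : is_derive e t (- L * e t)) by (unfold e; auto_derive; auto; ring).
  apply is_derive_ext with (fun t => e t * P t); [intros; symmetry; apply ptrans_PSeries|].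
  replace (fwd (fun x => p x t) y) with (- L * e t * P t + e t * P').
  - apply (Derive.is_derive_mult e P t _ _ Hde HdP).
  - unfold P'. rewrite (fwd_ext (fun x => p x t) (fun x => e t * PSeries (ptrans_coef x) t))
      by (intros; apply ptrans_PSeries).
    rewrite fwd_scal. ring.
Qed.

Lemma ptrans_bounds y t : 0 <= t -> 0 <= p y t <= 1.
Proof.
  intros Ht. pose proof Lam_pos as HL.
  assert (Hterm : forall n, 0 <= ptrans_coef y n * t ^ n <= / INR (fact n) * (L * t) ^ n).
  { intros n. rewrite Rpow_mult_distr. unfold ptrans_coef.
    pose proof (dist_nonneg n y). pose proof (dist_le_1 n y).
    pose proof (Rinv_0_lt_compat _ (lt_0_INR _ (lt_O_fact n))).
    pose proof (pow_le L n ltac:(lra)). pose proof (pow_le t n Ht).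
    assert (0 <= L ^ n * t ^ n * / INR (fact n)) by (repeat apply Rmult_le_pos; lra).
    unfold Rdiv. split; [repeat apply Rmult_le_pos; lra|nra]. }
  assert (Hup : PSeries (ptrans_coef y) t <= exp (L * t)).
  { rewrite exp_Reals. apply Series_le; [exact Hterm|apply ex_series_Rabs, CV_disk_exp]. }
  assert (Hlo : 0 <= PSeries (ptrans_coef y) t).
  { rewrite <- (PSeries_const_0 t). apply Series_le.
    - intros n. rewrite Rmult_0_l. split; [lra|apply Hterm].
    - apply ex_series_Rabs, CV_disk_ptrans_coef. }
  rewrite ptrans_PSeries. pose proof (exp_pos (- (L * t))).
  split; [apply Rmult_le_pos; lra|].
  rewrite <- (exp_0), <- (Rplus_opp_l (L * t)), exp_plus. apply Rmult_le_compat_l; lra.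
Qed.

Lemma ptrans_0 y : p y 0 = d 0 y.
Proof.
  rewrite ptrans_PSeries, PSeries_0, Rmult_0_r, Ropp_0, exp_0. unfold ptrans_coef. simpl. field.
Qed.

Lemma ptrans_continuous y t : continuous (p y) t.
Proof. exact (is_derive_continuous _ _ (forward_equation y) t). Qed.

(** * Laplace transforms *)

Lemma weighted_forward_FTC (e e' : R -> R) y B :
  (forall t, is_derive e t (e' t)) -> (forall t, continuous e' t) ->
  e B * p y B - e 0 * p y 0 =
    RInt (fun t => e' t * p y t) 0 B + fwd (fun x => RInt (fun t => e t * p x t) 0 B) y.
Proof.
  intros He He'.
  assert (Hce : forall t, continuous e t)
    by exact (is_derive_continuous e e' He).
  assert (Hcont : forall (w : R -> R) x t, continuous w t -> continuous (fun s => w s * p x s) t)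
    by (intros; apply (continuous_mult w (p x)); [assumption|apply ptrans_continuous]).
  assert (Hint : forall (w : R -> R) x,
            (forall t, continuous w t) -> ex_RInt (fun t => w t * p x t) 0 B)
    by (intros; apply (ex_RInt_continuous (V := R_CompleteNormedModule)); auto).
  unfold fwd. rewrite <- (lincomb_RInt _ (fun x t => e t * p x t)) by auto.
  set (df := fun t => e' t * p y t + lincomb ((- qo y, y) :: inflow y) (fun x => e t * p x t)).
  assert (Hdf : is_RInt df 0 B (e B * p y B - e 0 * p y 0)).
  { apply (is_RInt_derive (fun t => e t * p y t)); intros t _.
    - unfold df. rewrite lincomb_scal.
      change (lincomb _ (fun x => p x t)) with (fwd (fun x => p x t) y).
      apply (Derive.is_derive_mult e (p y)); [apply He|apply forward_equation].
    - apply (continuous_plus (fun t => e' t * p y t)); [apply Hcont, He'|].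
      apply (lincomb_continuous _ (fun x t => e t * p x t)). intros; apply Hcont, Hce. }
  rewrite <- (is_RInt_unique _ _ _ _ Hdf). unfold df.
  apply (RInt_plus (fun t => e' t * p y t)); [apply Hint, He'|].
  apply (lincomb_ex_RInt _ (fun x t => e t * p x t)). intros; apply Hint, Hce.
Qed.

Lemma weight_ptrans_bound (e : R -> R) a x t : 0 <= t ->
  Rabs (e t) <= exp (- (a * t)) -> Rabs (e t * p x t) <= exp (- (a * t)).
Proof.
  intros Ht He. destruct (ptrans_bounds x t Ht).
  rewrite Rabs_mult, (Rabs_pos_eq (p x t)) by lra.
  pose proof (Rabs_pos (e t)). nra.
Qed.

Lemma weighted_balance (e e' : R -> R) a (I : state -> R) (I' : R) y :
  0 < a -> (forall t, is_derive e t (e' t)) -> (forall t, continuous e' t) ->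
  (forall t, 0 <= t -> Rabs (e t) <= exp (- (a * t))) ->
  (forall x, is_lim_seq (fun n => RInt (fun t => e t * p x t) 0 (INR n)) (I x)) ->
  is_lim_seq (fun n => RInt (fun t => e' t * p y t) 0 (INR n)) I' ->
  - (e 0 * d 0 y) = I' + fwd I y.
Proof.
  intros Ha He He' Hdecay HI HI'.
  assert (Hlhs : is_lim_seq (fun n => e (INR n) * p y (INR n) - e 0 * p y 0) (- (e 0 * d 0 y))).
  { rewrite <- ptrans_0, <- Rminus_0_l.
    apply is_lim_seq_minus'; [|apply is_lim_seq_const].
    apply (is_lim_seq_exp_dominated (fun t => e t * p y t) a Ha).
    intros t Ht. apply weight_ptrans_bound; auto. }
  assert (Hrhs : is_lim_seq (fun n => e (INR n) * p y (INR n) - e 0 * p y 0) (I' + fwd I y)).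
  { eapply is_lim_seq_ext; [intros n; symmetry; apply weighted_forward_FTC; auto|].
    apply is_lim_seq_plus'; [exact HI'|]. apply lincomb_is_lim_seq. exact HI. }
  apply is_lim_seq_unique in Hlhs, Hrhs. rewrite Hlhs in Hrhs. injection Hrhs. auto.
Qed.

Lemma laplace_limits alpha x v : is_laplace_pi c l1 l2 m1 m2 alpha x v ->
  is_lim_seq (fun n => RInt (fun t => kernel_re (fst alpha) (snd alpha) t * p x t) 0 (INR n))
    (fst v) /\
  is_lim_seq (fun n => RInt (fun t => kernel_im (fst alpha) (snd alpha) t * p x t) 0 (INR n))
    (snd v).
Proof.
  intros H. destruct (is_RInt_gen_parts _ _ H) as [Hre Him].
  split; (eapply is_lim_seq_ext; [|eassumption]); intros n; apply RInt_ext; intros t _;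
    rewrite Cexp_kernel; reflexivity.
Qed.

Lemma is_lim_seq_RInt_comb (k1 k2 : R) (e1 e2 : R -> R) y (I1 I2 : R) :
  (forall t, continuous e1 t) -> (forall t, continuous e2 t) ->
  is_lim_seq (fun n => RInt (fun t => e1 t * p y t) 0 (INR n)) I1 ->
  is_lim_seq (fun n => RInt (fun t => e2 t * p y t) 0 (INR n)) I2 ->
  is_lim_seq (fun n => RInt (fun t => (k1 * e1 t + k2 * e2 t) * p y t) 0 (INR n))
    (k1 * I1 + k2 * I2).
Proof.
  intros Hc1 Hc2 H1 H2.
  assert (Hint : forall (w : R -> R) B,
            (forall t, continuous w t) -> ex_RInt (fun t => w t * p y t) 0 B)
    by (intros; apply (ex_RInt_continuous (V := R_CompleteNormedModule)); intros;
        apply (continuous_mult w (p y)); auto; apply ptrans_continuous).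
  apply is_lim_seq_ext with (fun n => k1 * RInt (fun t => e1 t * p y t) 0 (INR n)
                                    + k2 * RInt (fun t => e2 t * p y t) 0 (INR n)).
  - intros n. symmetry.
    rewrite (RInt_ext _ (fun t => k1 * (e1 t * p y t) + k2 * (e2 t * p y t)))
      by (intros; rewrite Rmult_plus_distr_r, !Rmult_assoc; reflexivity).
    rewrite (RInt_plus (fun t => k1 * (e1 t * p y t))) by
      (apply (ex_RInt_scal (fun t => _ t * p y t)); apply Hint; assumption).
    rewrite (RInt_scal (fun t => e1 t * p y t)), (RInt_scal (fun t => e2 t * p y t)) by auto.
    reflexivity.
  - apply is_lim_seq_plus'; apply (is_lim_seq_scal_l _ _ (Finite _)); assumption.
Qed.

Section Laplace.
Variables (alpha : C) (pi : state -> C).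
Hypotheses (Ha : 0 < fst alpha) (Hpi : forall x, is_laplace_pi c l1 l2 m1 m2 alpha x (pi x)).

Local Notation a := (fst alpha).
Local Notation b := (snd alpha).

Lemma laplace_balance y :
  Cmult alpha (pi y) =
  Cplus (RtoC (d 0 y)) (fwd (fun x => fst (pi x)) y, fwd (fun x => snd (pi x)) y).
Proof.
  pose proof (fun x => proj1 (laplace_limits _ _ _ (Hpi x))) as Hre.
  pose proof (fun x => proj2 (laplace_limits _ _ _ (Hpi x))) as Him.
  pose proof (is_derive_continuous _ _ (kernel_re_derive a b)) as Hcre.
  pose proof (is_derive_continuous _ _ (kernel_im_derive a b)) as Hcim.
  assert (E1 := weighted_balance (kernel_re a b) _ a (fun x => fst (pi x)) _ y Ha
    (kernel_re_derive a b) (fun t => continuous_plus _ _ t (continuous_scal_r _ _ t (Hcre t))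
                                          (continuous_scal_r _ _ t (Hcim t)))
    (fun t _ => kernel_re_bound a b t) Hre
    (is_lim_seq_RInt_comb (- a) b _ _ y _ _ Hcre Hcim (Hre y) (Him y))).
  assert (E2 := weighted_balance (kernel_im a b) _ a (fun x => snd (pi x)) _ y Ha
    (kernel_im_derive a b) (fun t => continuous_plus _ _ t (continuous_scal_r _ _ t (Hcim t))
                                          (continuous_scal_r _ _ t (Hcre t)))
    (fun t _ => kernel_im_bound a b t) Him
    (is_lim_seq_RInt_comb (- a) (- b) _ _ y _ _ Hcim Hcre (Him y) (Hre y))).
  unfold kernel_re, kernel_im in E1, E2.
  rewrite !Rmult_0_r, Ropp_0, exp_0, cos_0 in E1. rewrite !Rmult_0_r, Ropp_0, sin_0 in E2.
  rewrite Rmult_0_r, Ropp_0, Rmult_0_l in E2.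
  apply injective_projections; cbn [fst snd Cmult Cplus RtoC]; lra.
Qed.

Lemma laplace_bound y : Cmod (pi y) <= 2 / a.
Proof.
  assert (Hpart : forall (e : R -> R) (v : R), (forall t, continuous e t) ->
            (forall t, Rabs (e t) <= exp (- (a * t))) ->
            is_lim_seq (fun n => RInt (fun t => e t * p y t) 0 (INR n)) v -> Rabs v <= / a).
  { intros e v Hc Hb Hv. apply is_lim_seq_abs in Hv.
    refine (is_lim_seq_le _ _ (Rbar_abs v) (/ a) _ Hv (is_lim_seq_const _)). intros n.
    apply (RInt_exp_dominated _ a (INR n) Ha (pos_INR n)).
    - intros t. apply (continuous_mult _ _ t (Hc t) (ptrans_continuous y t)).
    - intros t Ht. apply (weight_ptrans_bound e a y t Ht (Hb t)). }
  destruct (laplace_limits _ _ _ (Hpi y)) as [Hre Him].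
  pose proof (Hpart _ _ (is_derive_continuous _ _ (kernel_re_derive a b)) (kernel_re_bound a b) Hre)
    as Hre_bound.
  pose proof (Hpart _ _ (is_derive_continuous _ _ (kernel_im_derive a b)) (kernel_im_bound a b) Him)
    as Him_bound.
  eapply Rle_trans; [apply Cmod_2Rmax|].
  assert (Hs : sqrt 2 <= 2) by (pose proof (sqrt_sqrt 2 ltac:(lra)); pose proof (sqrt_pos 2); nra).
  pose proof (sqrt_pos 2). pose proof (Rmax_l (Rabs (fst (pi y))) (Rabs (snd (pi y)))).
  pose proof (Rabs_pos (fst (pi y))). pose proof (Rmax_lub _ _ (/ a) Hre_bound Him_bound).
  unfold Rdiv. apply Rmult_le_compat; lra.
Qed.

(* On the levels [J >= c] no class-1 customer is in service. *)
Lemma laplace_level_recursion i J : (1 <= c)%nat -> (c <= J)%nat ->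
  ((INR c * m2)%R * pi (i, S J) - (alpha + (l1 + l2 + INR c * m2)%R) * pi (i, J)
   + l2 * pi (i, pred J))%C =
  match i with O => RtoC 0 | S i' => (- (l1 * pi (i', J)))%C end.
Proof.
  intros Hc HJ. destruct J as [|J]; [lia|].
  pose proof (laplace_balance (i, S J)) as E.
  assert (Hdep : dep1 i (S J) = 0 /\ dep1 (S i) (S J) = 0 /\
                 dep2 (S J) = INR c * m2 /\ dep2 (S (S J)) = INR c * m2).
  { unfold dep1, dep2. replace (c - S J)%nat with 0%nat by lia.
    rewrite !Nat.min_0_r, !Nat.min_l by lia. simpl. repeat split; ring. }
  destruct Hdep as (H1 & H2 & H3 & H4).
  assert (Hd0 : d 0 (i, S J) = 0) by (simpl; destruct i; reflexivity).
  rewrite !fwd_flux, H1, H2, H3, H4, Hd0 in E.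
  pose proof (f_equal fst E) as Ere. pose proof (f_equal snd E) as Eim. clear E.
  destruct i as [|i]; cbn [fst snd Cmult Cplus Cminus Copp RtoC prev pred] in *;
    apply injective_projections; cbn [fst snd Cmult Cplus Cminus Copp RtoC]; lra.
Qed.
End Laplace.
End Chain.

(** * The explicit solution *)

Section Candidate.
Local Open Scope C_scope.
Variables (c : nat) (pi : state -> C) (R1 R2 : C).

Local Notation v := (vseq c R1 R2 pi).
Local Notation a := (1 - R2).

(* The right-hand side of the theorem, with [negbin j k] in place of [C (j - 1 + k) k] so that
   at [j = 0] it equals [v i 0 = pi (i, c - 1)]. *)
Definition level_formula (r : C) (i j : nat) : C :=
  Csum (fun k => v i k * a ^ k * negbin j k * r ^ j) 0 i.

Lemma level_formula_0 r i : level_formula r i 0 = v i 0.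
Proof.
  unfold level_formula.
  rewrite Csum_cons, Csum_zero by (try intros k Hk; try destruct k; simpl; lia || ring).
  rewrite negbin_0. simpl. ring.
Qed.

Lemma level_formula_bounded r i : Cmod r < 1 -> exists M, forall j, Cmod (level_formula r i j) <= M.
Proof.
  intros Hr. apply (Csum_bounded (fun k j => v i k * a ^ k * negbin j k * r ^ j)). intros k.
  destruct (negbin_geom_bounded (Cmod r) k) as [Mk HMk]; [split; [apply Cmod_ge_0|exact Hr]|].
  exists (Cmod (v i k) * Cmod (a ^ k) * Mk)%R. intros j.
  rewrite !Cmod_mult, Cmod_R, (Cmod_pow r), (Rabs_pos_eq (negbin j k))
    by apply negbin_nonneg.
  rewrite Rmult_assoc. apply Rmult_le_compat_l; [|apply HMk].
  apply Rmult_le_pos; apply Cmod_ge_0.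
Qed.

Lemma vseq_tail_sum i m : (m <= S i)%nat ->
  Csum (fun k => v (S i) (S k) * a ^ S k) m i = R1 * a ^ S m * Csum (v i) m i.
Proof.
  intros Hm. set (h := fun k => a ^ S k * Csum (v i) k i).
  rewrite (Csum_ext _ (fun k => R1 * (h k - h (S k)))).
  - rewrite Csum_scal, Csum_telescope by exact Hm. unfold h.
    rewrite (Csum_nil _ (S i) i) by lia. ring.
  - intros k Hk. unfold h. rewrite (Csum_cons (v i) k i) by lia.
    change (v (S i) (S k)) with (R1 * (v i k + R2 * Csum (v i) (S k) i)).
    rewrite !Cpow_S. ring.
Qed.

Section Recursion.
Variables (lam mu w r phi l1 : C).
Hypotheses (Hmur : mu * r = lam * phi) (HR2 : R2 = r * phi) (HR1 : lam * R1 * a * a = l1 * r)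
  (Hroot : mu * r * r - w * r + lam = 0).

Lemma vseq_tail_identity i m : (m <= i)%nat ->
  mu * r * r * Csum (fun k => v (S i) (S k) * a ^ S k) m i - lam * (v (S i) (S m) * a ^ S m) =
  - (l1 * r * a ^ m * v i m).
Proof.
  intros Hm. rewrite vseq_tail_sum by lia.
  change (v (S i) (S m)) with (R1 * (v i m + R2 * Csum (v i) (S m) i)).
  rewrite (Csum_cons (v i) m i) by lia. apply Ceq_minus.
  transitivity (R1 * a ^ S m * (v i m + Csum (v i) (S m) i) * (mu * r * r - lam * R2)
                - a ^ m * v i m * (lam * R1 * a * a - l1 * r)); [rewrite !Cpow_S; ring|].
  rewrite HR1, HR2, <- (Cmult_assoc mu), (Cmult_comm r), Cmult_assoc, Hmur. ring.
Qed.

(* Pascal's rule and [w r = mu r^2 + lam] collapse the second difference of the coefficients. *)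
Lemma negbin_second_difference (X : nat -> C) n j :
  Csum (fun k => X k * (mu * r * r * negbin (S (S j)) k - w * r * negbin (S j) k
                        + lam * negbin j k)) 0 (S n) =
  Csum (fun m => negbin (S j) m * (mu * r * r * Csum (fun k => X (S k)) m n - lam * X (S m))) 0 n.
Proof.
  rewrite Csum_cons, Csum_shift by lia. rewrite !negbin_0.
  rewrite (Csum_ext _ (fun k => mu * r * r * (X (S k) * Csum (fun m => negbin (S j) m) 0 k)
                                 + (- lam) * (X (S k) * negbin (S j) k))).
  - rewrite Csum_plus, !Csum_scal, Csum_swap.
    rewrite (Csum_ext (fun m => negbin (S j) m * (mu * r * r * Csum (fun k => X (S k)) m n
                                                 - lam * X (S m)))
               (fun m => mu * r * r * (negbin (S j) m * Csum (fun k => X (S k)) m n)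
                         + (- lam) * (X (S m) * negbin (S j) m))) by (intros; ring).
    rewrite Csum_plus, !Csum_scal. apply Ceq_minus.
    transitivity (X 0%nat * (mu * r * r - w * r + lam)); [ring|]. rewrite Hroot. ring.
  - intros k _. rewrite <- negbin_partial_sum, !negbin_SS, !RtoC_plus.
    apply Ceq_minus.
    transitivity (X (S k) * (negbin j (S k) + negbin (S j) k) * (mu * r * r - w * r + lam));
      [ring|].
    rewrite Hroot. ring.
Qed.

Lemma level_formula_recursion i j :
  mu * level_formula r i (S (S j)) - w * level_formula r i (S j) + lam * level_formula r i j =
  match i with O => 0 | S i' => - (l1 * level_formula r i' (S j)) end.
Proof.
  set (X := fun k => v i k * a ^ k).
  assert (E : mu * level_formula r i (S (S j)) - w * level_formula r i (S j)
              + lam * level_formula r i j =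
    r ^ j * Csum (fun k => X k * (mu * r * r * negbin (S (S j)) k - w * r * negbin (S j) k
                                  + lam * negbin j k)) 0 i).
  { rewrite <- Csum_scal.
    rewrite (Csum_ext _ (fun k => mu * (v i k * a ^ k * negbin (S (S j)) k * r ^ S (S j))
                          + (- w * (v i k * a ^ k * negbin (S j) k * r ^ S j)
                          + lam * (v i k * a ^ k * negbin j k * r ^ j))))
      by (intros; unfold X; rewrite !Cpow_S; ring).
    rewrite !Csum_plus, !Csum_scal. unfold level_formula. ring. }
  rewrite E. destruct i as [|i].
  - rewrite Csum_cons, Csum_nil, !negbin_0 by lia. apply Ceq_minus.
    transitivity (r ^ j * X 0%nat * (mu * r * r - w * r + lam)); [ring|]. rewrite Hroot. ring.
  - rewrite negbin_second_difference.
    rewrite (Csum_ext _ (fun m => - (l1 * r) * (v i m * a ^ m * negbin (S j) m)))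
      by (intros m Hm; unfold X; rewrite vseq_tail_identity by lia; ring).
    unfold level_formula. rewrite Csum_scal.
    rewrite (Csum_ext (fun k => v i k * a ^ k * negbin (S j) k * r ^ S j)
                      (fun k => r ^ S j * (v i k * a ^ k * negbin (S j) k))) by (intros; ring).
    rewrite Csum_scal, Cpow_S. ring.
Qed.
End Recursion.
End Candidate.

Section Solution.
Local Open Scope C_scope.
Variables (c : nat) (l1 l2 m2 : R) (alpha : C).
Hypotheses (Hc : (1 <= c)%nat) (Hl1 : 0 < l1) (Hl2 : 0 < l2) (Hm2 : 0 < m2) (Ha : 0 < fst alpha).

Local Notation mu := (INR c * m2)%R.
Local Notation w := (alpha + (l1 + l2 + INR c * m2)%R).
Local Notation phi := (phi2 c l1 l2 m2 alpha).
Local Notation r := (r2 c l1 l2 m2 alpha).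
Local Notation R1 := (bigR1 c l1 l2 m2 alpha).
Local Notation R2 := (bigR2 c l1 l2 m2 alpha).

Lemma cmu2_pos : (0 < mu)%R.
Proof. apply Rmult_lt_0_compat; [apply lt_0_INR; lia|exact Hm2]. Qed.

Lemma l1_alpha_re_pos : (0 < fst (Cplus l1 alpha))%R.
Proof. simpl. lra. Qed.

Lemma phi2_root : l2 * phi * phi - w * phi + mu = 0.
Proof.
  pose proof (phiB_root l2 mu (RtoC l1 + alpha) Hl2) as H.
  replace (RtoC (l2 + mu) + (RtoC l1 + alpha)) with w in H
    by (apply injective_projections; simpl; ring).
  rewrite <- H. unfold phi2. ring.
Qed.

Lemma phi2_lt_1 : Cmod phi < 1.
Proof. apply phiB_lt_1; [exact Hl2|apply cmu2_pos|apply l1_alpha_re_pos]. Qed.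

Lemma r2_lt_1 : Cmod r < 1.
Proof. apply phiB_scaled_lt_1; [exact Hl2|apply cmu2_pos|apply l1_alpha_re_pos]. Qed.

Lemma cmu2_r2 : mu * r = l2 * phi.
Proof.
  pose proof cmu2_pos. unfold r2, rho2. rewrite RtoC_div by lra.
  field. apply RtoC_neq_0. lra.
Qed.

Lemma r2_root : mu * r * r - w * r + l2 = 0.
Proof.
  pose proof cmu2_pos. unfold r2, rho2. rewrite RtoC_div by lra.
  transitivity (l2 / mu * (l2 * phi * phi - w * phi + mu)).
  - field. apply RtoC_neq_0. lra.
  - rewrite phi2_root. ring.
Qed.

Lemma bigR1_identity : l2 * R1 * (1 - R2) * (1 - R2) = l1 * r.
Proof.
  assert (HR2 : Cmod R2 < 1).
  { unfold bigR2. rewrite Cmod_mult. pose proof r2_lt_1. pose proof phi2_lt_1.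
    pose proof (Cmod_ge_0 r). pose proof (Cmod_ge_0 phi). nra. }
  assert (H1R2 : 1 - R2 <> 0).
  { intros E. apply Ceq_minus in E. rewrite <- E, Cmod_1 in HR2. lra. }
  assert (Hl2' : RtoC l2 <> 0) by (apply RtoC_neq_0; lra).
  unfold bigR1, Omega2. fold phi.
  replace (RtoC (rho2 c l2 m2) * (phi * phi)) with R2 by (unfold bigR2, r2; ring).
  replace (r * phi) with R2 by reflexivity.
  change (RtoC (rho2 c l2 m2) * phi) with r.
  field. split; assumption.
Qed.

Variables (m1 : R) (pi : state -> C).
Hypotheses (Hm1 : 0 < m1) (Hpi : forall x, is_laplace_pi c l1 l2 m1 m2 alpha x (pi x)).

Local Notation G := (level_formula c pi R1 R2 r).

Lemma level_solution_step i : (forall i' j, i = S i' -> pi (i', (c - 1 + j)%nat) = G i' j) ->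
  forall j, pi (i, (c - 1 + j)%nat) = G i j.
Proof.
  intros IH. set (D := fun j => pi (i, (c - 1 + j)%nat) - G i j).
  destruct (level_formula_bounded c pi R1 R2 r i r2_lt_1) as [M HM].
  assert (HD : forall j, D j = 0).
  { apply (bounded_recurrence_zero l2 mu w r phi D (2 / fst alpha + M)).
    - apply RtoC_neq_0. pose proof cmu2_pos. lra.
    - exact cmu2_r2.
    - exact phi2_root.
    - exact phi2_lt_1.
    - intros j.
      pose proof (laplace_level_recursion c l1 l2 m1 m2 Hl1 Hl2 Hm1 Hm2 alpha pi Ha Hpi i
                    (c - 1 + S j) Hc ltac:(lia)) as Hpi_rec.
      pose proof (level_formula_recursion c pi R1 R2 l2 mu w r phi l1
                    cmu2_r2 eq_refl bigR1_identity r2_root i j) as HG_rec.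
      replace (S (c - 1 + S j)) with (c - 1 + S (S j))%nat in Hpi_rec by lia.
      replace (pred (c - 1 + S j)) with (c - 1 + j)%nat in Hpi_rec by lia.
      destruct i as [|i']; [|rewrite (IH i' (S j) eq_refl) in Hpi_rec];
        exact (recurrence_difference _ _ _ _ (fun j => pi (_, (c - 1 + j)%nat)) _ j Hpi_rec HG_rec).
    - unfold D. rewrite level_formula_0, Nat.add_0_r. apply (proj1 (Ceq_minus _ _)).
      destruct i; reflexivity.
    - intros j. eapply Rle_trans; [apply Cmod_triangle|]. rewrite Cmod_opp.
      apply Rplus_le_compat; [|apply HM].
      apply (laplace_bound c l1 l2 m1 m2 Hl1 Hl2 Hm1 Hm2 alpha pi Ha Hpi). }
  intros j. apply Ceq_minus, HD.
Qed.

Lemma level_solution i j : pi (i, (c - 1 + j)%nat) = G i j.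
Proof.
  revert j; induction i as [|i IH]; apply level_solution_step; intros i' j Hi; [discriminate|].
  injection Hi as <-. apply IH.
Qed.
End Solution.

Theorem theorem2 (c : nat) (l1 l2 m1 m2 : R) (alpha : C) (pi : state -> C) :
  (1 <= c)%nat -> 0 < l1 -> 0 < l2 -> 0 < m1 -> 0 < m2 ->
  0 < fst alpha ->
  (forall x : state, is_laplace_pi c l1 l2 m1 m2 alpha x (pi x)) ->
  forall i j : nat, (1 <= j)%nat ->
    pi (i, (c - 1 + j)%nat) =
    Csum (fun k => Cmult (Cmult (Cmult (vseq c (bigR1 c l1 l2 m2 alpha)
                                              (bigR2 c l1 l2 m2 alpha) pi i k)
                                        (Cpow (Cminus (RtoC 1) (bigR2 c l1 l2 m2 alpha)) k))
                                 (RtoC (Binomial.C (j - 1 + k) k)))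
                         (Cpow (r2 c l1 l2 m2 alpha) j))
         0 i.
Proof.
  intros Hc Hl1 Hl2 Hm1 Hm2 Ha Hpi i j Hj.
  rewrite (level_solution c l1 l2 m2 alpha Hc Hl1 Hl2 Hm2 Ha m1 pi Hm1 Hpi).
  apply Csum_ext. intros k _. destruct j as [|j]; [lia|].
  replace (S j - 1 + k)%nat with (j + k)%nat by lia. rewrite negbin_binomial. reflexivity.
Qed.
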